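(* Let $G$ be a graph that has a set of twins $T=\{u_1,\dots,u_r\}$ with $r\ge 3$, and let $G_i=G-u_i$. If $S_i$ is a zero forcing set of $G_i$, then $S_i\cup\{u_i\}$ is a zero forcing set of $G$. If $S$ is a zero forcing set of $G$ with $u_i\in S$, then $S\setminus\{u_i\}$ is a zero forcing set of $G_i$. Consequently $S_i\mapsto S_i\cup\{u_i\}$ is a bijection between the zero forcing sets of $G_i$ and the zero forcing sets of $G$ containing $u_i$, and a zero forcing set $S_i$ of $G_i$ is minimal if and only if $S_i\cup\{u_i\}$ is a minimal zero forcing set of $G$.
   Context: Vertices $u,w$ of $G$ are twins if $N_G(u)=N_G(w)$ (open neighborhoods); a set of twins is a set of vertices any two of which are twins. $G-u$ is the graph obtained by deleting $u$. Zero forcing: starting with a set $S$ of blue vertices, a blue vertex $v$ may turn blue a white vertex $w$ if $w$ is the only white neighbor of $v$; $S$ is a zero forcing set if repeated application colors all vertices blue. Minimal means minimal under inclusion. *)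

From mathcomp Require Import all_boot.
Set Implicit Arguments. Unset Strict Implicit. Unset Printing Implicit Defensive.

(* A vertex subset V denotes the
   induced subgraph G[V]; in particular G - u is G[[set: T] :\ u]. *)
Definition simple_graph (T : finType) (e : rel T) : Prop :=
  symmetric e /\ irreflexive e.

Definition nbhd (T : finType) (e : rel T) (x : T) : {set T} := [set y | e x y].

Definition twins (T : finType) (e : rel T) (u w : T) : Prop :=
  nbhd e u = nbhd e w.

Definition twin_set (T : finType) (e : rel T) (A : {set T}) : Prop :=
  forall u w, u \in A -> w \in A -> twins e u w.

Inductive blue (T : finType) (e : rel T) (V S : {set T}) : T -> Prop :=
  | blue_init x : x \in S -> blue e V S x
  | blue_force v w : v \in V -> w \in V -> e v w -> blue e V S v ->
      (forall y, y \in V -> e v y -> y != w -> blue e V S y) ->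
      blue e V S w.

Definition zfs (T : finType) (e : rel T) (V S : {set T}) : Prop :=
  S \subset V /\ forall x, x \in V -> blue e V S x.

Definition min_zfs (T : finType) (e : rel T) (V S : {set T}) : Prop :=
  zfs e V S /\ forall S' : {set T}, S' \proper S -> ~ zfs e V S'.

(* Twins are interchangeable: the transposition of two twins is a graph
   automorphism, and a force performed by a twin u can be performed by any
   other blue twin.  A zero forcing set misses at most one vertex of a twin
   class, so with at least three twins every zero forcing set S of G contains
   a twin t <> u; hence S - u forces G - u, with t taking over the forces of
   u.  For minimality, a smaller zero forcing set of G avoiding u contains a
   twin t, and swapping t and u turns it into one containing u, which
   descends to a zero forcing set of G - u strictly inside S_i. *)

From mathcomp Require Import all_boot fingroup perm.
Set Implicit Arguments. Unset Strict Implicit. Unset Printing Implicit Defensive.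

Section ProperSetU1D1.
Variable T : finType.
Implicit Types (a : T) (A B : {set T}).

Lemma proper_setU1 a A B : a \notin B -> A \proper B -> a |: A \proper a |: B.
Proof.
move=> aB; rewrite !properEcard => /andP[sAB ltAB].
have aA : a \notin A by apply: contra aB; apply: subsetP.
by rewrite setUS //= !cardsU1 aA aB.
Qed.

Lemma proper_setD1 a A B : a \in A -> A \proper B -> A :\ a \proper B :\ a.
Proof.
move=> aA; rewrite !properEcard => /andP[sAB ltAB].
have aB : a \in B by apply: subsetP aA.
rewrite setSD //=; move: ltAB.
by rewrite (cardsD1 a A) (cardsD1 a B) aA aB.
Qed.

End ProperSetU1D1.

Section Twins.
Variables (T : finType) (e : rel T).
Hypothesis graph_e : simple_graph e.

Lemma edge_twinsl a b z : twins e a b -> e a z = e b z.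
Proof.
by move=> tab; have /setP/(_ z) := tab; rewrite !inE.
Qed.

Lemma edge_twinsr a b z : twins e a b -> e z a = e z b.
Proof.
by have [sym_e _] := graph_e; rewrite (sym_e z a) (sym_e z b); apply: edge_twinsl.
Qed.

Lemma tperm_twins_mono a b : twins e a b -> {mono tperm a b : x y / e x y}.
Proof.
have [_ irr_e] := graph_e; move=> tab x y.
by case: tpermP => [->|->|_ _]; case: tpermP => [->|->|_ _];
  rewrite ?irr_e ?(edge_twinsl _ tab) ?(edge_twinsr _ tab).
Qed.

End Twins.

Section Automorphisms.
Variables (T : finType) (e : rel T) (f : {perm T}).
Hypothesis f_mono : {mono f : x y / e x y}.

Lemma blue_perm S x : blue e [set: T] S x -> blue e [set: T] (f @: S) (f x).
Proof.
elim=> [y yS | v w _ _ evw _ IHv _ IHy]; first exact/blue_init/imset_f.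
apply: (blue_force (v := f v)) => //; first by rewrite f_mono.
move=> y _ evy yw; rewrite -(permKV f y); apply: IHy => //.
  by rewrite -f_mono permKV.
by apply: contraNneq yw => <-; rewrite permKV.
Qed.

Lemma zfs_perm S : zfs e [set: T] S -> zfs e [set: T] (f @: S).
Proof.
move=> [_ blueS]; split=> [|x _]; first exact: subsetT.
by rewrite -(permKV f x); apply/blue_perm/blueS.
Qed.

End Automorphisms.

Lemma tperm_imset (T : finType) (a b : T) (A : {set T}) :
  a \notin A -> b \in A -> tperm a b @: A = a |: (A :\ b).
Proof.
move=> aA bA; have ab : a != b by apply: contraNneq aA => ->.
apply/setP=> x; rewrite -{1}(tpermK a b x) mem_imset; last exact: perm_inj.
rewrite !inE; case: tpermP => [->|->|/eqP/negbTE xa /eqP xb].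
- by rewrite eqxx bA.
- by rewrite (negbTE aA) eqxx eq_sym (negbTE ab).
- by rewrite xa xb.
Qed.

Section Forcing.
Variables (T : finType) (e : rel T).
Hypothesis graph_e : simple_graph e.
Implicit Types (V S : {set T}) (a b u x : T).

Lemma zfs_setD1_notin V S u : zfs e (V :\ u) S -> u \notin S.
Proof. by case=> sSV _; apply: contraTN (eqxx u) => /(subsetP sSV)/setD1P[]. Qed.

Lemma blue_setD1 V S u x : blue e (V :\ u) S x -> blue e V (u |: S) x.
Proof.
elim=> [y yS | v w /setD1P[_ vV] /setD1P[_ wV] evw _ IHv _ IHy].
  exact/blue_init/setU1r.
apply: (blue_force (v := v)) => // y yV evy yw.
have [->|yu] := eqVneq y u; first exact/blue_init/setU11.
by apply: IHy => //; apply/setD1P.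
Qed.

Lemma zfs_setU1 V S u : u \in V -> zfs e (V :\ u) S -> zfs e V (u |: S).
Proof.
move=> uV [sSV blueS]; split=> [|x xV].
  by rewrite subUset sub1set uV (subset_trans sSV) ?subsetDl.
have [->|xu] := eqVneq x u; first exact/blue_init/setU11.
by apply/blue_setD1/blueS/setD1P.
Qed.

(* Every force by [a] is replayed in [G[V] - a] by its blue twin [b]. *)
Lemma blue_twin_setD1 V S a b x : a != b -> twins e a b -> b \in V -> b \in S ->
  blue e V S x -> x = a \/ blue e (V :\ a) (S :\ a) x.
Proof.
move=> ab tab bV bS.
elim=> [y yS | v w vV wV evw _ IHv _ IHy].
  have [->|ya] := eqVneq y a; [by left | by right; apply/blue_init/setD1P].
have [->|wa] := eqVneq w a; [by left | right].
have others y : y \in V :\ a -> e v y -> y != w -> blue e (V :\ a) (S :\ a) y.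
  by case/setD1P=> ya yV evy yw; case: (IHy y yV evy yw) => // /eqP; rewrite (negbTE ya).
have [va|va] := eqVneq v a.
  subst v; apply: (blue_force (v := b)) => //.
  - by apply/setD1P; rewrite eq_sym.
  - exact/setD1P.
  - by rewrite -(edge_twinsl _ tab).
  - by apply/blue_init/setD1P; rewrite eq_sym.
  - by move=> y yV; rewrite -(edge_twinsl _ tab); apply: others.
apply: (blue_force (v := v)) => //; try exact/setD1P.
by case: IHv => // /eqP; rewrite (negbTE va).
Qed.

Lemma zfs_twin_setD1 V S a b :
  a != b -> twins e a b -> b \in S -> zfs e V S -> zfs e (V :\ a) (S :\ a).
Proof.
move=> ab tab bS [sSV blueS]; split=> [|x /setD1P[xa xV]]; first exact: setSD.
have bV := subsetP sSV b bS.
by case: (blue_twin_setD1 ab tab bV bS (blueS x xV)) => // /eqP; rewrite (negbTE xa).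
Qed.

(* Neither twin can be forced first: a vertex adjacent to one of them is
   adjacent to the other, which is still white. *)
Lemma blue_twins_notin V S a b x : a != b -> twins e a b -> a \in V -> b \in V ->
  a \notin S -> b \notin S -> blue e V S x -> x != a /\ x != b.
Proof.
move=> ab tab aV bV aS bS.
elim=> [y yS | v w _ _ evw _ _ _ IHy].
  by split; apply: contraTneq yS => ->.
split; apply/eqP=> wE; subst w.
- have evb : e v b by rewrite -(edge_twinsr graph_e _ tab).
  by case: (IHy b bV evb); rewrite ?eqxx // eq_sym.
- have eva : e v a by rewrite (edge_twinsr graph_e _ tab).
  by case: (IHy a aV eva ab); rewrite eqxx.
Qed.

Lemma zfs_twin_mem V S a b : a != b -> twins e a b -> a \in V -> b \in V ->
  zfs e V S -> (a \in S) || (b \in S).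
Proof.
move=> ab tab aV bV [_ blueS]; apply/negPn/negP; rewrite negb_or => /andP[aS bS].
by case: (blue_twins_notin ab tab aV bV aS bS (blueS a aV)); rewrite eqxx.
Qed.

Lemma min_zfs_setU1_inv V S u : u \in V -> zfs e (V :\ u) S ->
  min_zfs e V (u |: S) -> min_zfs e (V :\ u) S.
Proof.
move=> uV zS [_ minUS]; split=> // S' ltS' zS'.
apply: (minUS (u |: S')); last exact: zfs_setU1.
by apply: proper_setU1 => //; apply: zfs_setD1_notin zS.
Qed.

End Forcing.

Section TwinClass.
Variables (T : finType) (e : rel T) (Tw : {set T}) (u : T).
Hypotheses (graph_e : simple_graph e) (twins_Tw : twin_set e Tw).
Hypotheses (Tw_ge3 : 3 <= #|Tw|) (uTw : u \in Tw).

Lemma zfs_other_twin S : zfs e [set: T] S -> exists2 t, t \in Tw :\ u & t \in S.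
Proof.
move=> zS; have /card_gt1P[u1 [u2 [u1Tw u2Tw u12]]] : 1 < #|Tw :\ u|.
  by have := Tw_ge3; rewrite (cardsD1 u) uTw.
have [/setD1P[_ u1T] /setD1P[_ u2T]] := (u1Tw, u2Tw).
have := zfs_twin_mem graph_e u12 (twins_Tw u1T u2T) (in_setT _) (in_setT _) zS.
by case/orP; [exists u1 | exists u2].
Qed.

Lemma zfs_setD1_twin S : zfs e [set: T] S -> zfs e ([set: T] :\ u) (S :\ u).
Proof.
move=> zS; have [t /setD1P[tu tTw] tS] := zfs_other_twin zS.
by apply: zfs_twin_setD1 _ (twins_Tw uTw tTw) tS zS; rewrite eq_sym.
Qed.

Lemma min_zfs_setU1 S : min_zfs e ([set: T] :\ u) S -> min_zfs e [set: T] (u |: S).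
Proof.
move=> [zS minS]; split=> [|S' ltS' zS']; first exact: zfs_setU1.
have uS := zfs_setD1_notin zS.
have [uS'|uS'] := boolP (u \in S').
  apply: (minS (S' :\ u)); last exact: zfs_setD1_twin.
  by rewrite -(setU1K uS); apply: proper_setD1.
have sS'S : S' \subset S by rewrite -(setU1K uS) subsetD1 (proper_sub ltS') uS'.
have [t /setD1P[tu tTw] tS'] := zfs_other_twin zS'.
have zSwap := zfs_perm (tperm_twins_mono graph_e (twins_Tw uTw tTw)) zS'.
rewrite tperm_imset // in zSwap.
apply: (minS (S' :\ t)); first exact: proper_sub_trans (properD1 tS') sS'S.
have uS't : u \notin S' :\ t by apply: contra uS' => /setD1P[].
by rewrite -(setU1K uS't); apply: zfs_setD1_twin.
Qed.

End TwinClass.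

Theorem proposition3p6 (T : finType) (e : rel T) (Tw : {set T}) (u : T) :
  simple_graph e -> twin_set e Tw -> 3 <= #|Tw| -> u \in Tw ->
  let Vu := [set: T] :\ u in
  (* S_i zfs of G - u  ==>  S_i + u zfs of G *)
  (forall Si, zfs e Vu Si -> zfs e [set: T] (u |: Si)) /\
  (* S zfs of G containing u  ==>  S - u zfs of G - u *)
  (forall S, zfs e [set: T] S -> u \in S -> zfs e Vu (S :\ u)) /\
  (* Si |-> Si + u is a bijection from zfs of G - u onto zfs of G containing u *)
  ((forall S1 S2, zfs e Vu S1 -> zfs e Vu S2 -> u |: S1 = u |: S2 -> S1 = S2) /\
   (forall S, zfs e [set: T] S -> u \in S ->
      exists Si, zfs e Vu Si /\ S = u |: Si)) /\
  (* minimality is preserved both ways *)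
  (forall Si, zfs e Vu Si -> (min_zfs e Vu Si <-> min_zfs e [set: T] (u |: Si))).
Proof.
move=> graph_e twins_Tw Tw_ge3 uTw Vu.
have zfs_del := zfs_setD1_twin graph_e twins_Tw Tw_ge3 uTw.
split; first by move=> Si; apply: zfs_setU1.
split; first by move=> S zS _; apply: zfs_del.
split; [split|].
- move=> S1 S2 zS1 zS2 eqS.
  by rewrite -(setU1K (zfs_setD1_notin zS1)) -(setU1K (zfs_setD1_notin zS2)) eqS.
- move=> S zS uS; exists (S :\ u).
  by split; [apply: zfs_del | rewrite setD1K].
- move=> Si zSi; split=> [minSi|]; last exact: min_zfs_setU1_inv.
  exact: min_zfs_setU1 graph_e twins_Tw Tw_ge3 uTw _ minSi.
Qed.
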